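(* Let $G=(V,E)$ be a graph with colouring $f:V\to\{B,R\}$ and let $E'$ be an optimal solution to the MIRE problem on $(G,f)$. Then for every blue node $v$, exactly $\max(r(v)-b(v),0)$ edges of $E\setminus E'$ are incident to $v$, where $r(v),b(v)$ are the numbers of red and blue neighbours of $v$ in $G$.
   Context: Graphs are finite, simple and undirected. A colouring $f:V\to\{B,R\}$ partitions $V$ into the blue nodes $B=f^{-1}(B)$ and red nodes $R=f^{-1}(R)$. For an edge set $E'$ on $V$ and $v\in V$, let $b_{E'}(v)$ and $r_{E'}(v)$ be the numbers of blue and red neighbours of $v$ in $(V,E')$; write $b(v)=b_E(v)$, $r(v)=r_E(v)$. A node $v$ is under (majority) illusion in $(V,E')$ if $r_{E'}(v)>b_{E'}(v)$. Standing assumption: $|B|>|R|$. An optimal solution to MIRE is an edge set $E'\subseteq E$ such that no node is under illusion in $(V,E')$ and $|E\setminus E'|$ is minimum among all such sets. *)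

From HB Require Import structures.
From mathcomp Require Import all_boot.
Set Implicit Arguments. Unset Strict Implicit. Unset Printing Implicit Defensive.

(* Vertices: a finType T. An edge set is a set of 2-element subsets of T
   (finite, simple, undirected graph). A colouring is col : T -> colour. *)
Inductive colour := Blue | Red.
Definition colour_eqb (a b : colour) : bool :=
  match a, b with Blue, Blue | Red, Red => true | _, _ => false end.
Lemma colour_eqP : Equality.axiom colour_eqb.
Proof. by case; case; constructor. Qed.
HB.instance Definition _ := hasDecEq.Build colour colour_eqP.

Definition is_simple_edges (T : finType) (E : {set {set T}}) : Prop :=
  forall e, e \in E -> #|e| = 2.

Definition nbrs (T : finType) (E' : {set {set T}}) (v : T) : {set T} :=
  [set u | (u != v) && ([set u; v] \in E')].

Definition bcount (T : finType) (f : T -> colour) (E' : {set {set T}}) (v : T) : nat :=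
  #|[set u in nbrs E' v | f u == Blue]|.
Definition rcount (T : finType) (f : T -> colour) (E' : {set {set T}}) (v : T) : nat :=
  #|[set u in nbrs E' v | f u == Red]|.

Definition under_illusion (T : finType) (f : T -> colour) (E' : {set {set T}}) (v : T) : bool :=
  bcount f E' v < rcount f E' v.

Definition feasible (T : finType) (f : T -> colour) (E E' : {set {set T}}) : Prop :=
  E' \subset E /\ forall v, ~~ under_illusion f E' v.

Definition optimal_MIRE (T : finType) (f : T -> colour) (E E' : {set {set T}}) : Prop :=
  feasible f E E' /\
  forall E'', feasible f E E'' -> #|E :\: E'| <= #|E :\: E''|.

Definition more_blue (T : finType) (f : T -> colour) : Prop :=
  #|[set v | f v == Red]| < #|[set v | f v == Blue]|.

From mathcomp Require Import all_boot zify.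

Set Implicit Arguments.
Unset Strict Implicit.
Unset Printing Implicit Defensive.

(* Let v be blue and let D be the set of neighbours u of v whose edge uv was
   removed.  Putting a removed edge uv back into an optimal E' must create an
   illusion somewhere, and a new edge can only create one at an endpoint whose
   new neighbour is red.  As v is blue, the illusion appears at v and u is red.
   Hence D is all red, and if D is nonempty then b_{E'}(v) <= r_{E'}(v), which
   with feasibility gives b_{E'}(v) = r_{E'}(v).  Since b(v) = b_{E'}(v) and
   r(v) = r_{E'}(v) + |D|, the number |D| of removed edges at v is
   max(r(v) - b(v), 0). *)

Section Neighbourhoods.
Variable T : finType.
Implicit Types (E : {set {set T}}) (f : T -> colour) (u v w x : T).

Lemma eq_set2 x w u v : x != w ->
  ([set x; w] == [set u; v]) = (x \in [set u; v]) && (w \in [set u; v]).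
Proof.
move=> xw; apply/eqP/andP => [<-|[]]; first by rewrite set21 set22.
rewrite !inE => /orP[]/eqP ex /orP[]/eqP ew; subst; rewrite ?eqxx // in xw *.
exact: setUC.
Qed.

Lemma in_nbrs_setU_edge E u v w x :
  (x \in nbrs ([set u; v] |: E) w) =
  (x \in nbrs E w) || [&& x != w, x \in [set u; v] & w \in [set u; v]].
Proof.
rewrite /nbrs !inE; case: (x =P w) => //= /eqP xw.
by rewrite eq_set2 // !inE orbC.
Qed.

Lemma nbrsS E1 E2 v : E1 \subset E2 -> nbrs E1 v \subset nbrs E2 v.
Proof.
by move=> sE; apply/subsetP => x; rewrite !inE => /andP[-> /(subsetP sE)].
Qed.

Lemma nbrs_setD E1 E2 v : nbrs (E1 :\: E2) v = nbrs E1 v :\: nbrs E2 v.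
Proof. by apply/setP => x; rewrite !inE; case: (x != v). Qed.

Lemma nbrs_setU_edge_sub E u v : nbrs ([set u; v] |: E) v \subset u |: nbrs E v.
Proof.
apply/subsetP => x; rewrite in_setU1 in_nbrs_setU_edge.
case/orP=> [-> | /and3P[xv]]; first by rewrite orbT.
by rewrite !inE (negbTE xv) orbF => ->.
Qed.

Lemma card_incident_edges E v : is_simple_edges E ->
  #|[set e in E | v \in e]| = #|nbrs E v|.
Proof.
move=> simpleE; rewrite -(card_in_imset (f := fun u => [set u; v])); last first.
  move=> u1 u2; rewrite inE => /andP[u1v _] _ /= eq12.
  by move: (set21 u1 v); rewrite eq12 !inE (negbTE u1v) orbF => /eqP.
apply: eq_card => e; rewrite inE; apply/andP/imsetP => [[eE ve] | [u]].
  have /eqP/cards2P[x [y [xy def_e]]] := simpleE e eE.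
  move: ve eE; rewrite def_e !inE => /orP[]/eqP-> eE.
    by exists y; rewrite ?inE 1?eq_sym ?xy 1?setUC.
  by exists x; rewrite ?inE ?xy.
by rewrite inE => /andP[_ ?] ->; rewrite set22.
Qed.

Lemma bcountS f E1 E2 v : E1 \subset E2 -> bcount f E1 v <= bcount f E2 v.
Proof.
move=> sE; apply/subset_leq_card/subsetP => x /setIdP[xN fx].
by rewrite inE (subsetP (nbrsS v sE)).
Qed.

Lemma card_coloured_nbrs_split f c E E' v : E' \subset E ->
  #|[set x in nbrs E v | f x == c]| =
  #|[set x in nbrs E' v | f x == c]| +
  #|[set x in nbrs (E :\: E') v | f x == c]|.
Proof.
move=> sE; rewrite -(cardsID (nbrs E' v)) nbrs_setD.
move: (nbrs E v) (nbrs E' v) (nbrsS v sE) => N N' sN.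
congr (_ + _); apply: eq_card => x; rewrite !inE -?andbA //.
have [/(subsetP sN) -> | _] := boolP (x \in N'); last by rewrite !andbF.
by rewrite andbT.
Qed.

Lemma illusion_setU_edge f E u v w :
  ~~ under_illusion f E w -> under_illusion f ([set u; v] |: E) w ->
  (w = v /\ f u = Red) \/ (w = u /\ f v = Red).
Proof.
move=> ok ill.
have /subsetPn[x /setIdP[xN /eqP fx]] :
    ~~ ([set x in nbrs ([set u; v] |: E) w | f x == Red]
        \subset [set x in nbrs E w | f x == Red]).
  apply: contraL ill => /subset_leq_card redS; rewrite /under_illusion -leqNgt.
  apply: leq_trans redS (leq_trans _ (bcountS f w (subsetUr _ E))).
  by rewrite leqNgt.
rewrite in_set fx eqxx andbT.
move: xN; rewrite in_nbrs_setU_edge => /orP[-> // | /and3P[xw xuv wuv] _].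
move: xuv wuv; rewrite !inE => /orP[]/eqP ex /orP[]/eqP ew; subst;
  rewrite ?eqxx // in xw; by [left | right].
Qed.

Lemma illusion_setU_edge_end f E u v :
  under_illusion f ([set u; v] |: E) v -> bcount f E v <= rcount f E v.
Proof.
rewrite /under_illusion => ill.
have redS : rcount f ([set u; v] |: E) v <= (rcount f E v).+1.
  apply: leq_trans (_ : #|u |: [set x in nbrs E v | f x == Red]| <= _).
    apply/subset_leq_card/subsetP => x.
    case/setIdP=> /(subsetP (nbrs_setU_edge_sub E u v)).
    by rewrite !in_setU1 => /orP[-> // | xN fx]; rewrite in_set xN fx orbT.
  by rewrite cardsU1 addnC -addn1 leq_add2l leq_b1.
rewrite -ltnS; apply: leq_trans redS; apply: leq_trans ill.
by rewrite ltnS bcountS ?subsetUr.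
Qed.

End Neighbourhoods.

Section OptimalMIRE.
Variables (T : finType) (f : T -> colour) (E E' : {set {set T}}).
Hypothesis optE' : optimal_MIRE f E E'.

Lemma optimal_MIRE_setU_removed e :
  e \in E :\: E' -> exists w, under_illusion f (e |: E') w.
Proof.
have [[sE _] opt] := optE'.
move=> eD; apply/existsP; apply: contraT => /existsPn noill.
have feasU : feasible f E (e |: E').
  by split=> //; rewrite subUset sub1set sE andbT; case/setDP: eD.
have := opt _ feasU; rewrite setUC -setDDl (cardsD1 e (E :\: E')) eD.
by rewrite add1n ltnn.
Qed.

Lemma optimal_MIRE_removed_nbr v u : f v = Blue -> u \in nbrs (E :\: E') v ->
  f u = Red /\ bcount f E' v <= rcount f E' v.
Proof.
move=> fv uD; have [[_ feas] _] := optE'.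
have uvD : [set u; v] \in E :\: E' by move: uD; rewrite inE => /andP[].
have [w ill] := optimal_MIRE_setU_removed uvD.
have [[wv fu] | [_ fvR]] := illusion_setU_edge (feas w) ill.
  by rewrite wv in ill; split; last exact: illusion_setU_edge_end ill.
by rewrite fv in fvR.
Qed.

End OptimalMIRE.

Theorem mainTheorem4 (T : finType) (E E' : {set {set T}}) (f : T -> colour) :
  is_simple_edges E ->
  more_blue f ->
  optimal_MIRE f E E' ->
  forall v : T, f v = Blue ->
    #|[set e in E :\: E' | v \in e]| = maxn (rcount f E v - bcount f E v) 0.
Proof.
move=> simpleE _ optE' v fv; have [[sE feas] _] := optE'.
have simpleD : is_simple_edges (E :\: E') by move=> e /setDP[/simpleE].
rewrite card_incident_edges //; set D := nbrs (E :\: E') v.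
have redD : [set u in D | f u == Red] = D.
  apply/setP => u; rewrite inE; apply/andb_idr => uD.
  by have [-> _] := optimal_MIRE_removed_nbr optE' fv uD.
have blueD : [set u in D | f u == Blue] = set0.
  apply/setP => u; rewrite in_set0; apply/setIdP => -[uD].
  by have [-> _] := optimal_MIRE_removed_nbr optE' fv uD.
have bE : bcount f E v = bcount f E' v.
  by rewrite /bcount (card_coloured_nbrs_split _ _ _ sE) -/D blueD cards0 addn0.
have rE : rcount f E v = rcount f E' v + #|D|.
  by rewrite /rcount (card_coloured_nbrs_split _ _ _ sE) -/D redD.
have := feas v; rewrite /under_illusion -leqNgt bE rE.
have [D0 | [u uD]] := set_0Vmem D; first by rewrite D0 cards0; lia.
have [_ tight] := optimal_MIRE_removed_nbr optE' fv uD.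
have : 0 < #|D| by apply/card_gt0P; exists u.
lia.
Qed.
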